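(* Let $d\ge1$ and $t\ge1$ be integers and $\nu\in(0,1)$. Define $r>0$ by \[ r^2=(1-\nu)\frac{d+2}{t(t+d)}. \] Then $\widetilde P^{(\frac d2,\frac d2-1)}_t(\cos\phi)\ge\nu$ for all $0\le\phi\le r$.
   Context: For $\alpha,\beta>-1$, $P^{(\alpha,\beta)}_t$ denotes the Jacobi polynomial of degree $t$ (orthogonal on $[-1,1]$ with respect to $(1-u)^\alpha(1+u)^\beta$), normalized by $P^{(\alpha,\beta)}_t(1)=\binom{t+\alpha}{t}$ with $\binom{x}{y}=\frac{\Gamma(x+1)}{\Gamma(y+1)\Gamma(x-y+1)}$. The normalized Jacobi polynomial is $\widetilde P^{(\alpha,\beta)}_t:=P^{(\alpha,\beta)}_t/P^{(\alpha,\beta)}_t(1)$. *)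

From HB Require Import structures.
From mathcomp Require Import all_boot all_order all_algebra.
From mathcomp Require Import all_classical all_reals all_analysis.
Set Implicit Arguments. Unset Strict Implicit. Unset Printing Implicit Defensive.
Import Order.TTheory GRing.Theory Num.Theory.
Local Open Scope ring_scope.

(* Generalized binomial coefficient binom(x, k) for real x and natural k:
   x (x-1) ... (x-k+1) / k!, which equals Gamma(x+1)/(Gamma(k+1)Gamma(x-k+1))
   whenever the latter is defined. *)
Definition gbinom {R : realType} (x : R) (k : nat) : R :=
  (\prod_(i < k) (x - i%:R)) / (k`!)%:R.

(* Jacobi polynomial P_t^{(a,b)}(u), explicit formula (Szego (4.3.2)):
   sum_{s=0}^t binom(t+a, t-s) binom(t+b, s) ((u-1)/2)^s ((u+1)/2)^(t-s).
   It satisfies P_t^{(a,b)}(1) = binom(t+a, t). *)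
Definition jacobiP {R : realType} (a b : R) (t : nat) (u : R) : R :=
  \sum_(s < t.+1)
    gbinom (t%:R + a) (t - s) * gbinom (t%:R + b) s
    * ((u - 1) / 2) ^+ s * ((u + 1) / 2) ^+ (t - s).

Definition jacobiPn {R : realType} (a b : R) (t : nat) (u : R) : R :=
  jacobiP a b t u / jacobiP a b t 1.

From HB Require Import structures.
From mathcomp Require Import all_boot all_order all_algebra.
From mathcomp Require Import all_classical all_reals all_analysis.
From mathcomp Require Import ring lra.
Import Order.TTheory GRing.Theory Num.Theory numFieldNormedType.Exports.
Local Open Scope ring_scope.

(* With x = sin^2 (phi/2), i.e. cos phi = 1 - 2x, the explicit formula writes
   P_t^(a,b)(1 - 2x) as the alternating sum over s of the terms
   B_s = binom(t+a, t-s) binom(t+b, s) x^s (1-x)^(t-s).  For small x these are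
   nonnegative and decreasing in s, so the sum is at least
   B_0 - B_1 = binom(t+a, t) (1-x)^(t-1) (1 - x - x t(t+b)/(a+1)), and Bernoulli's
   inequality turns this into the tangent-line bound
     P~_t^(a,b)(1 - 2x) >= 1 - x t(t+a+b+1)/(a+1).
   For a = d/2, b = d/2 - 1 the slope is 2t(t+d)/(d+2), and x <= phi^2/4 <= r^2/4
   makes the right-hand side at least (1+nu)/2 >= nu. *)

Section GeneralizedBinomial.
Context {R : realType}.
Implicit Types (y : R) (k : nat).

Lemma gbinom0 y : gbinom y 0 = 1.
Proof. by rewrite /gbinom big_ord0 fact0 divr1. Qed.

Lemma gbinomS y k : gbinom y k.+1 = gbinom y k * (y - k%:R) / k.+1%:R.
Proof.
rewrite /gbinom big_ord_recr /= factS natrM.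
have k1_neq0 : (k.+1%:R : R) != 0 by rewrite pnatr_eq0.
have kfact_neq0 : ((k`!)%:R : R) != 0 by rewrite pnatr_eq0 -lt0n fact_gt0.
by field; apply/andP.
Qed.

Lemma gbinom_ge0 y k : k%:R <= y + 1 -> 0 <= gbinom y k.
Proof.
move=> hy; rewrite /gbinom divr_ge0 // prodr_ge0 // => i _.
have : (i%:R : R) + 1 <= k%:R by rewrite natr1 ler_nat.
lra.
Qed.

Lemma gbinom_gt0 y k : k%:R < y + 1 -> 0 < gbinom y k.
Proof.
move=> hy; rewrite /gbinom divr_gt0 ?ltr0n ?fact_gt0 // prodr_gt0 // => i _.
have : (i%:R : R) + 1 <= k%:R by rewrite natr1 ler_nat.
lra.
Qed.

End GeneralizedBinomial.

Section AlternatingSums.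
Context {R : realFieldType}.
Implicit Types (B : nat -> R) (n : nat).

Lemma alternating_sum_recl B n :
  \sum_(s < n.+1) (-1) ^+ s * B s = B 0%N - \sum_(s < n) (-1) ^+ s * B s.+1.
Proof.
rewrite big_ord_recl expr0 mul1r -sumrN.
by congr (_ + _); apply: eq_bigr => i _; rewrite exprS mulN1r mulNr.
Qed.

Lemma alternating_sum_bounds B n :
  (forall s, (s <= n)%N -> 0 <= B s) ->
  (forall s, (s < n)%N -> B s.+1 <= B s) ->
  0 <= \sum_(s < n.+1) (-1) ^+ s * B s <= B 0%N.
Proof.
elim: n B => [|n IH] B B_ge0 B_decr.
  by rewrite big_ord1 expr0 mul1r lexx B_ge0.
rewrite alternating_sum_recl.
have /andP[tail_ge0 tail_le] := IH (fun s => B s.+1) (fun s => B_ge0 s.+1)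
  (fun s => B_decr s.+1).
have := B_decr 0%N isT; lra.
Qed.

Lemma alternating_sum_ge_head B n :
  (forall s, (s <= n.+1)%N -> 0 <= B s) ->
  (forall s, (s < n.+1)%N -> B s.+1 <= B s) ->
  B 0%N - B 1%N <= \sum_(s < n.+2) (-1) ^+ s * B s.
Proof.
move=> B_ge0 B_decr; rewrite alternating_sum_recl lerD2l lerN2.
by case/andP: (alternating_sum_bounds (fun s => B s.+1) n (fun s => B_ge0 s.+1)
  (fun s => B_decr s.+1)).
Qed.

Lemma bernoulli_ineq (x : R) n : x <= 1 -> 1 - n%:R * x <= (1 - x) ^+ n.
Proof.
move=> x_le1; elim: n => [|n IH]; first by rewrite expr0 mul0r subr0.
rewrite exprSr -natr1.
have := ler_wpM2r (_ : 0 <= 1 - x) IH; rewrite subr_ge0 => /(_ x_le1).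
have : 0 <= n%:R * x ^+ 2 by rewrite mulr_ge0 ?sqr_ge0.
nra.
Qed.

Lemma bernoulli_ineq_mul (x w : R) n : 0 <= x <= 1 -> 0 <= w <= 1 ->
  w - n%:R * x <= (1 - x) ^+ n * w.
Proof.
move=> /andP[x_ge0 x_le1] /andP[w_ge0 w_le1].
have := ler_wpM2r w_ge0 (bernoulli_ineq x n x_le1).
have : 0 <= n%:R * x * (1 - w) by rewrite !mulr_ge0 ?subr_ge0.
lra.
Qed.

End AlternatingSums.

Section Trigonometry.
Context {R : realType}.

Lemma norm_sin_le (y : R) : `|sin y| <= `|y|.
Proof.
wlog y_ge0 : y / 0 <= y.
  move=> hwlog; have [/hwlog //|/ltW y_le0] := leP 0 y.
  by rewrite -normrN -sinN -(normrN y) hwlog // oppr_ge0.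
have [|c _] := @MVT_segment _ sin cos _ _ y_ge0.
  by apply: (@continuous_subspaceT R R) => z; exact: continuous_sin.
rewrite sin0 !subr0 => ->.
by rewrite normrM (ger0_norm y_ge0) ler_piMl // cos_max.
Qed.

Lemma oneBcos_le (phi : R) : 1 - cos phi <= phi ^+ 2 / 2.
Proof.
have {1}-> : phi = (phi / 2) *+ 2 by rewrite mulr2n; field.
rewrite cos_mulr2n cos2sin2.
have : sin (phi / 2) ^+ 2 <= (phi / 2) ^+ 2.
  by rewrite -real_normK ?num_real // -[X in _ <= X]real_normK ?num_real //
    lerXn2r ?nnegrE // norm_sin_le.
lra.
Qed.

End Trigonometry.

Section JacobiNearOne.
Context {R : realType}.
Variables (a b : R) (t : nat).
Implicit Types (x : R) (s : nat).

Definition jacobi_term x s : R :=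
  gbinom (t%:R + a) (t - s) * gbinom (t%:R + b) s * x ^+ s * (1 - x) ^+ (t - s).

Lemma jacobiP_alternating x :
  jacobiP a b t (1 - 2 * x) = \sum_(s < t.+1) (-1) ^+ s * jacobi_term x s.
Proof.
apply: eq_bigr => s _.
have -> : (1 - 2 * x - 1) / 2 = - x by field.
have -> : (1 - 2 * x + 1) / 2 = 1 - x by field.
by rewrite (exprNn x) /jacobi_term; ring.
Qed.

Lemma jacobiP_at1 : jacobiP a b t 1 = gbinom (t%:R + a) t.
Proof.
rewrite /jacobiP big_ord_recl big1 ?addr0 => [|s _].
  rewrite subn0 gbinom0 subrr expr0 !mulr1 (_ : (1 + 1) / 2 = 1) ?expr1n ?mulr1 //.
  by field.
by rewrite subrr mul0r expr0n /= mulr0 mul0r.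
Qed.

Lemma gbinom_term_ge0 x i j : -1 <= a -> -1 <= b -> 0 <= x <= 1 ->
  (i <= t)%N -> (j <= t)%N ->
  0 <= gbinom (t%:R + a) i * gbinom (t%:R + b) j * x ^+ j * (1 - x) ^+ i.
Proof.
move=> a_ge b_ge /andP[x_ge0 x_le1] i_le j_le.
have gbinom_shift_ge0 (c : R) k : -1 <= c -> (k <= t)%N -> 0 <= gbinom (t%:R + c) k.
  move=> c_ge k_le; apply: gbinom_ge0.
  have : k%:R <= t%:R :> R by rewrite ler_nat.
  lra.
apply: mulr_ge0; last by rewrite exprn_ge0 ?subr_ge0.
apply: mulr_ge0; last exact: exprn_ge0.
by apply: mulr_ge0; apply: gbinom_shift_ge0.
Qed.

Lemma jacobi_term_ge0 x s : -1 <= a -> -1 <= b -> 0 <= x <= 1 -> (s <= t)%N ->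
  0 <= jacobi_term x s.
Proof. by move=> *; apply: gbinom_term_ge0 => //; rewrite leq_subr. Qed.

Lemma jacobi_term_decreasing x s : -1 <= a -> -1 <= b -> 0 <= x <= 1 ->
  x * (t%:R * (t%:R + b)) <= (a + 1) * (1 - x) ->
  (s < t)%N -> jacobi_term x s.+1 <= jacobi_term x s.
Proof.
move=> a_ge b_ge x01 x_small s_lt_t; have /andP[x_ge0 x_le1] := x01.
set m := (t - s.+1)%N.
have tsE : (t - s = m.+1)%N by rewrite /m subnS prednK // subn_gt0.
set C := gbinom (t%:R + a) m * gbinom (t%:R + b) s * x ^+ s * (1 - x) ^+ m.
have C_ge0 : 0 <= C by rewrite gbinom_term_ge0 // ?leq_subr // ltnW.
have termSE : jacobi_term x s.+1 = C * (x * (t%:R + b - s%:R) / s.+1%:R).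
  by rewrite /jacobi_term /C gbinomS exprSr; ring.
have termE : jacobi_term x s = C * ((t%:R + a - m%:R) * (1 - x) / m.+1%:R).
  by rewrite /jacobi_term /C tsE gbinomS exprSr; ring.
have mE : m%:R = t%:R - s%:R - 1 :> R.
  by rewrite /m natrB // -natr1; lra.
rewrite termSE termE ler_wpM2l // ler_pdivrMr ?ltr0Sn // mulrAC.
rewrite ler_pdivlMr ?ltr0Sn // -!natr1 mE.
have s_ge0 : 0 <= s%:R :> R by [].
have s_lt : s%:R + 1 <= t%:R :> R by rewrite natr1 ler_nat.
have tail_le : (t%:R + b - s%:R) * (t%:R - s%:R) <= t%:R * (t%:R + b).
  by rewrite mulrC ler_pM //; lra.
have head_ge : a + 1 <= (a + s%:R + 1) * (s%:R + 1).
  have : 0 <= s%:R * (a + s%:R + 2) by rewrite mulr_ge0 //; lra.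
  lra.
have -> : t%:R + a - (t%:R - s%:R - 1) = a + s%:R + 1 by ring.
have -> : t%:R - s%:R - 1 + 1 = t%:R - s%:R :> R by ring.
rewrite -mulrA [leRHS]mulrAC.
apply: le_trans (ler_wpM2l x_ge0 tail_le) _; apply: le_trans x_small _.
by rewrite ler_wpM2r ?subr_ge0.
Qed.

Lemma jacobi_term_head x : (0 < t)%N -> a + 1 != 0 ->
  jacobi_term x 0 - jacobi_term x 1 =
  gbinom (t%:R + a) t * (1 - x) ^+ t.-1 * (1 - x - t%:R * (t%:R + b) / (a + 1) * x).
Proof.
move=> t_gt0 a1_neq0; have [n tE] : exists n, t = n.+1 by exists t.-1; rewrite prednK.
have n1_neq0 : n.+1%:R != 0 :> R by rewrite pnatr_eq0.
rewrite /jacobi_term tE /= subn0 subSS subn0 !gbinomS gbinom0 expr0 expr1 exprS.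
have -> : n.+1%:R + a - n%:R = a + 1 by rewrite -natr1; ring.
by field; apply/andP.
Qed.

Lemma jacobiP_ge_head x : -1 <= a -> -1 <= b -> (0 < t)%N -> 0 <= x <= 1 ->
  x * (t%:R * (t%:R + b)) <= (a + 1) * (1 - x) ->
  jacobi_term x 0 - jacobi_term x 1 <= jacobiP a b t (1 - 2 * x).
Proof.
move=> a_ge b_ge t_gt0 x01 x_small.
have [n tE] : exists n, t = n.+1 by exists t.-1; rewrite prednK.
rewrite jacobiP_alternating tE; apply: alternating_sum_ge_head => s s_le.
  by apply: jacobi_term_ge0 => //; rewrite tE.
by apply: jacobi_term_decreasing => //; rewrite tE.
Qed.

Lemma jacobiPn_ge_tangent x : -1 < a -> -1 <= b -> (0 < t)%N -> 0 <= x ->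
  x * (t%:R * (t%:R + a + b + 1) / (a + 1)) <= 1 ->
  1 - x * (t%:R * (t%:R + a + b + 1) / (a + 1)) <= jacobiPn a b t (1 - 2 * x).
Proof.
move=> a_gt b_ge t_gt0 x_ge0.
have a1_neq0 : a + 1 != 0 by rewrite lt0r_neq0 //; lra.
set k := t%:R * (t%:R + b) / (a + 1).
have -> : t%:R * (t%:R + a + b + 1) / (a + 1) = t%:R + k by rewrite /k; field.
move=> x_small.
have t_ge1 : 1 <= t%:R :> R by rewrite ler1n.
have xk_ge0 : 0 <= x * k by rewrite /k !mulr_ge0 ?invr_ge0; lra.
have x_le_xt : x <= x * t%:R by rewrite ler_peMr.
have x01 : 0 <= x <= 1 by apply/andP; split => //; lra.
have decr_cond : x * (t%:R * (t%:R + b)) <= (a + 1) * (1 - x).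
  rewrite -[_ * (_ + b)](divfK a1_neq0) -/k mulrA [leRHS]mulrC ler_wpM2r; lra.
have G_gt0 : 0 < gbinom (t%:R + a) t by apply: gbinom_gt0; lra.
rewrite /jacobiPn jacobiP_at1 ler_pdivlMr //.
apply: le_trans _ (jacobiP_ge_head _ (ltW a_gt) b_ge t_gt0 x01 decr_cond).
rewrite jacobi_term_head // -/k mulrC -mulrA ler_pM2l //.
have tE : t.-1%:R = t%:R - 1 :> R by rewrite -[in RHS](prednK t_gt0) -natr1 addrK.
have w01 : 0 <= 1 - x - k * x <= 1 by apply/andP; split; lra.
have := bernoulli_ineq_mul _ _ t.-1 x01 w01.
rewrite tE; lra.
Qed.

End JacobiNearOne.

Theorem proposition3p2 (R : realType) (d t : nat) (nu r : R) :
  (1 <= d)%N -> (1 <= t)%N -> 0 < nu -> nu < 1 -> 0 < r ->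
  r ^+ 2 = (1 - nu) * (d%:R + 2) / (t%:R * (t%:R + d%:R)) ->
  forall phi : R, 0 <= phi -> phi <= r ->
    nu <= jacobiPn (d%:R / 2) (d%:R / 2 - 1) t (cos phi).
Proof.
move=> _ t_gt0 nu_gt0 nu_lt1 _ r2E phi phi_ge0 phi_le_r.
set x := (1 - cos phi) / 2.
have -> : cos phi = 1 - 2 * x by rewrite /x; lra.
have d_ge0 : 0 <= d%:R :> R by [].
have t_pos : 0 < t%:R :> R by rewrite ltr0n.
have Q_gt0 : 0 < t%:R * (t%:R + d%:R) :> R by apply: mulr_gt0; lra.
have slopeE : t%:R * (t%:R + d%:R / 2 + (d%:R / 2 - 1) + 1) / (d%:R / 2 + 1) =
    2 * (t%:R * (t%:R + d%:R)) / (d%:R + 2) :> R.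
  by field; lra.
have phi2_le : phi ^+ 2 <= r ^+ 2 by rewrite lerXn2r ?nnegrE //; lra.
have x_le : x <= r ^+ 2 / 4 by have := oneBcos_le phi; rewrite /x; lra.
have x_slope : x * (2 * (t%:R * (t%:R + d%:R)) / (d%:R + 2)) <= (1 - nu) / 2.
  apply: le_trans (ler_wpM2r _ x_le) _; first by rewrite !mulr_ge0 ?invr_ge0 //; lra.
  by rewrite r2E le_eqVlt; apply/orP; left; apply/eqP; field; rewrite gt_eqF //; lra.
have x_ge0 : 0 <= x by rewrite /x; have := cos_le1 phi; lra.
have a_gt : -1 < d%:R / 2 :> R by lra.
have b_ge : -1 <= d%:R / 2 - 1 :> R by lra.
have x_small :
    x * (t%:R * (t%:R + d%:R / 2 + (d%:R / 2 - 1) + 1) / (d%:R / 2 + 1)) <= 1.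
  by rewrite slopeE; lra.
apply: le_trans _ (jacobiPn_ge_tangent _ _ _ _ a_gt b_ge t_gt0 x_ge0 x_small).
rewrite slopeE; lra.
Qed.
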